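(* Let $T$ be a tree with $n$ vertices and $m$ edges, maximum degree $\Delta$ and minimum degree $\delta$, and let $M_1(T)$ be its first Zagreb index. Then \[ \sigma(T)\geq M_1(T)-\frac{2mn^2(\Delta-1)+\delta-1}{n+\Delta}. \]
   Context: For a graph $G$ with $d_u$ the degree of $u$, the sigma index is $\sigma(G)=\sum_{uv\in E(G)}(d_u-d_v)^2$ and the first Zagreb index is $M_1(G)=\sum_{v\in V(G)} d_v^2$. *)

From mathcomp Require Import all_boot all_order all_algebra.
Set Implicit Arguments. Unset Strict Implicit. Unset Printing Implicit Defensive.
Import Order.TTheory GRing.Theory Num.Theory.

Definition simple_graph (T : finType) (e : rel T) : Prop :=
  symmetric e /\ irreflexive e.

Definition gconnected (T : finType) (e : rel T) : Prop :=
  forall x y : T, connect e x y.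

Definition acyclic (T : finType) (e : rel T) : Prop :=
  forall c : seq T, 3 <= size c -> uniq c -> ~~ cycle e c.

Definition is_tree (T : finType) (e : rel T) : Prop :=
  [/\ simple_graph e, gconnected e & acyclic e].

Definition deg (T : finType) (e : rel T) (x : T) : nat := #|[set y | e x y]|.

(* the edge set, each unordered edge {u,v} represented once as the ordered
   pair (u,v) with enum_rank u < enum_rank v *)
Definition oedges (T : finType) (e : rel T) : {set T * T} :=
  [set p : T * T | e p.1 p.2 && (enum_rank p.1 < enum_rank p.2)].

Definition nedges (T : finType) (e : rel T) : nat := #|oedges e|.

(* maximum and minimum degree (every degree is < #|T|, so #|T| is a
   neutral starting value for the minimum) *)
Definition maxdeg (T : finType) (e : rel T) : nat := \max_(x : T) deg e x.
Definition mindeg (T : finType) (e : rel T) : nat :=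
  \big[minn/#|T|]_(x : T) deg e x.

Local Open Scope ring_scope.

Definition sigma_index (R : numDomainType) (T : finType) (e : rel T) : R :=
  \sum_(p in oedges e) ((deg e p.1)%:R - (deg e p.2)%:R) ^+ 2.

Definition zagreb1 (R : numDomainType) (T : finType) (e : rel T) : R :=
  \sum_(x : T) ((deg e x)%:R) ^+ 2.

From mathcomp Require Import all_boot all_order all_algebra zify ring.
Import Order.TTheory GRing.Theory Num.Theory.
Set Implicit Arguments. Unset Strict Implicit.

(* Since sigma(T) >= 0 it suffices to show M_1(T) (n + Delta) <= 2 m n^2 (Delta - 1) + delta - 1.
   Bounding d_v^2 <= Delta d_v and summing with the handshake lemma gives M_1 <= 2 m Delta, and
   Delta (n + Delta) <= n^2 (Delta - 1) whenever 2 <= Delta <= n - 1 and n >= 4.  For n = 3 the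
   tree is a path, and the leaf saves just enough in both M_1 and 2m. *)

Section Degrees.

Variables (T : finType) (e : rel T).

Lemma deg_sum x : deg e x = \sum_y (e x y : nat).
Proof.
rewrite /deg -sum1dep_card big_mkcond /=.
by apply: eq_bigr => y _; case: (e x y).
Qed.

Lemma nedges_sum :
  nedges e = \sum_(p : T * T) (e p.1 p.2 && (enum_rank p.1 < enum_rank p.2) : nat).
Proof.
rewrite /nedges /oedges -sum1dep_card big_mkcond /=.
by apply: eq_bigr => p _; case: (_ && _).
Qed.

Lemma handshake : simple_graph e -> \sum_x deg e x = 2 * nedges e.
Proof.
case=> sym irr.
have edge_split (p : T * T) : (e p.1 p.2 : nat) =
    (e p.1 p.2 && (enum_rank p.1 < enum_rank p.2))%N
  + (e p.2 p.1 && (enum_rank p.2 < enum_rank p.1))%N.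
  case: p => x y /=; rewrite (sym y x); case exy: (e x y) => //=.
  case: ltngtP => //= /val_inj/enum_rank_inj xy.
  by rewrite xy irr in exy.
under eq_bigr do rewrite deg_sum.
rewrite pair_big /= (eq_bigr _ (fun p _ => edge_split p)) big_split /=.
rewrite [X in _ + X](reindex_inj (@inv_inj _ (fun p : T * T => (p.2, p.1)) _)); last by case.
by rewrite /= -nedges_sum addnn mul2n.
Qed.

Lemma deg_le_card_pred x : irreflexive e -> deg e x <= #|T|.-1.
Proof.
move=> irr; rewrite -(cardsC1 x); apply: subset_leq_card.
by apply/subsetP => y; rewrite !inE; apply: contraTneq => ->; rewrite irr.
Qed.

Lemma connected_closed_setT (S : {set T}) x :
  gconnected e -> x \in S -> (forall y z, y \in S -> e y z -> z \in S) ->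
  forall z, z \in S.
Proof.
move=> con xS closedS z; have /connectP[p + ->] := con x z.
elim: p x xS => [|y p IHp] x xS //= /andP[exy py].
exact: IHp (closedS _ _ xS exy) py.
Qed.

Lemma deg_gt0 x : gconnected e -> (1 < #|T|)%N -> 0 < deg e x.
Proof.
move=> con n2; rewrite lt0n; apply/negP => /eqP/card0_eq deg0.
have [y] : exists y, y \in [set~ x] by apply/card_gt0P; rewrite cardsC1; lia.
have closed1 y' z : y' \in [set x] -> e y' z -> z \in [set x].
  by rewrite inE => /eqP-> exz; have := deg0 z; rewrite inE exz.
by rewrite in_setC (connected_closed_setT con (set11 x) closed1).
Qed.

Lemma exists_deg_gt1 : simple_graph e -> gconnected e -> (2 < #|T|)%N ->
  exists x, 1 < deg e x.
Proof.
move=> [sym _] con n3; apply/existsP; apply: contraT; rewrite negb_exists.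
move=> /forallP deg_le1; have {}deg_le1 z : deg e z <= 1 by rewrite leqNgt deg_le1.
have [x _] : exists x, x \in [set: T] by apply/card_gt0P; rewrite cardsT; lia.
pose S := x |: [set y | e x y].
(* a neighbour of x has x as its only neighbour *)
have closedS y z : y \in S -> e y z -> z \in S.
  rewrite !inE => /orP[/eqP-> -> | exy eyz]; first by rewrite orbT.
  apply/orP; left; apply: contraT => zx.
  have : #|[set x; z]| <= deg e y.
    by apply/subset_leq_card/subsetP => w; rewrite !inE => /orP[]/eqP->; rewrite // sym.
  by rewrite cards2 eq_sym zx; have := deg_le1 y; lia.
have [y] : exists y, y \in ~: S.
  apply/card_gt0P; rewrite cardsCs setCK cardsU1.
  by have := deg_le1 x; have := leq_b1 (x \notin [set y | e x y]); rewrite /deg; lia.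
by rewrite inE (connected_closed_setT con (setU11 x _) closedS).
Qed.

Lemma exists_deg_le1_card3 : is_tree e -> #|T| = 3 -> exists x, deg e x <= 1.
Proof.
move=> [[sym irr] _ acy] n3; apply/existsP; apply: contraT; rewrite negb_exists.
move=> /forallP deg_gt1.
have adj y z : z != y -> e y z.
  move=> zy; have := deg_gt1 y; rewrite -ltnNge => deg_gt1y.
  have := deg_le_card_pred y irr; rewrite n3 => deg_le2y.
  suff : z \in [set w | e y w] by rewrite inE.
  have /eqP-> : [set w | e y w] == [set~ y].
    rewrite eqEcard cardsC1 n3 -/(deg e y); apply/andP; split; last by lia.
    by apply/subsetP => w; rewrite !inE; apply: contraTneq => ->; rewrite irr.
  by rewrite !inE.
have := enum_uniq T; have := cardE T; rewrite n3.
case: (enum T) => [|a [|b [|c [|? ?]]]] //= _.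
rewrite !inE !negb_or => /and3P[/andP[ab ac] bc _].
have := acy [:: a; b; c] isT; rewrite /= !inE !negb_or ab ac bc => /(_ isT).
by rewrite (adj a b) ?(adj b c) ?(adj c a) // eq_sym.
Qed.

Lemma leq_deg_maxdeg x : deg e x <= maxdeg e.
Proof. exact: leq_bigmax. Qed.

Lemma maxdeg_le_card_pred : irreflexive e -> maxdeg e <= #|T|.-1.
Proof. by move=> irr; apply/bigmax_leqP => x _; apply: deg_le_card_pred. Qed.

Lemma maxdeg_gt1 : simple_graph e -> gconnected e -> (2 < #|T|)%N -> 1 < maxdeg e.
Proof.
move=> sg con n3; have [x deg_x] := exists_deg_gt1 sg con n3.
exact: leq_trans deg_x (leq_deg_maxdeg x).
Qed.

Lemma mindeg_gt0 : gconnected e -> (1 < #|T|)%N -> 0 < mindeg e.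
Proof.
move=> con n2; apply: (big_ind (fun k => 0 < k)) => [|a b|x _]; try lia.
exact: deg_gt0.
Qed.

Lemma sum_sqr_deg_le x : simple_graph e ->
  \sum_y deg e y ^ 2 + (maxdeg e - deg e x) * deg e x <= maxdeg e * (2 * nedges e).
Proof.
move=> sg; rewrite -handshake // big_distrr /= (bigD1 x) //= [X in _ <= X](bigD1 x) //=.
have others : \sum_(y | y != x) deg e y ^ 2 <= \sum_(y | y != x) maxdeg e * deg e y.
  by apply: leq_sum => y _; rewrite leq_mul2r leq_deg_maxdeg orbT.
have at_x : deg e x ^ 2 + (maxdeg e - deg e x) * deg e x = maxdeg e * deg e x.
  by rewrite mulnBl subnKC // leq_mul2r leq_deg_maxdeg orbT.
lia.
Qed.

Lemma double_nedges_le x : simple_graph e ->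
  2 * nedges e + (maxdeg e - deg e x) <= #|T| * maxdeg e.
Proof.
move=> sg; have -> : #|T| * maxdeg e = \sum_(y : T) maxdeg e by rewrite sum_nat_const.
rewrite -handshake // (bigD1 x) //= [X in _ <= X](bigD1 x) //=.
have others : \sum_(y | y != x) deg e y <= \sum_(y | y != x) maxdeg e.
  by apply: leq_sum => y _; apply: leq_deg_maxdeg.
have := leq_deg_maxdeg x; lia.
Qed.

Lemma tree_sum_sqr_deg_le : is_tree e -> (2 < #|T|)%N ->
  (\sum_x deg e x ^ 2) * (#|T| + maxdeg e)
    <= 2 * nedges e * #|T| ^ 2 * (maxdeg e - 1) + (mindeg e - 1).
Proof.
move=> tree n3; have [sg con _] := tree; have [_ irr] := sg.
have D2 := maxdeg_gt1 sg con n3; have Dn := maxdeg_le_card_pred irr.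
have [n_eq3 | n_gt3] := eqVneq #|T| 3.
  have [x leaf_x] := exists_deg_le1_card3 tree n_eq3.
  have deg_x : 0 < deg e x by apply: deg_gt0; rewrite // n_eq3.
  have := sum_sqr_deg_le x sg; have := double_nedges_le x sg.
  rewrite n_eq3 in Dn *; have -> : maxdeg e = 2 by lia.
  have -> : deg e x = 1 by lia.
  lia.
have [x _] : exists x, x \in [set: T] by apply/card_gt0P; rewrite cardsT; lia.
have M_le := leq_trans (leq_addr _ _) (sum_sqr_deg_le x sg).
have key : maxdeg e * (#|T| + maxdeg e) <= #|T| ^ 2 * (maxdeg e - 1) by nia.
apply: leq_trans (leq_mul M_le (leqnn _)) (leq_trans _ (leq_addr _ _)).
rewrite mulnAC mulnC -[2 * _ * _ * _]mulnA.
exact: leq_mul (leqnn _) key.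
Qed.

End Degrees.

Local Open Scope ring_scope.

Lemma sigma_index_ge0 (R : numDomainType) (T : finType) (e : rel T) :
  0 <= sigma_index R e.
Proof. by apply: sumr_ge0 => p _; rewrite -realEsqr rpredB ?realn. Qed.

Lemma zagreb1E (R : numDomainType) (T : finType) (e : rel T) :
  zagreb1 R e = (\sum_x deg e x ^ 2)%N%:R.
Proof. by rewrite natr_sum; apply: eq_bigr => x _; rewrite natrX. Qed.

Theorem theorem4p5 (R : realFieldType) (T : finType) (e : rel T) :
  is_tree e -> (2 < #|T|)%N ->
  let n : R := (#|T|)%:R in
  let m : R := (nedges e)%:R in
  let Delta : R := (maxdeg e)%:R in
  let delta : R := (mindeg e)%:R in
  sigma_index R e >=
    zagreb1 R e - (2 * m * n ^+ 2 * (Delta - 1) + delta - 1) / (n + Delta).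
Proof.
move=> tree n3; rewrite [in X in is_true X]/=.
have [sg con _] := tree.
have D1 : (1 <= maxdeg e)%N by apply: ltnW; apply: maxdeg_gt1.
have d1 : (1 <= mindeg e)%N by apply: mindeg_gt0 => //; lia.
rewrite lerBlDr ler_wpDl ?sigma_index_ge0 // ler_pdivlMr; last first.
  by rewrite -natrD ltr0n; lia.
have -> : 2 * (nedges e)%:R * (#|T|)%:R ^+ 2 * ((maxdeg e)%:R - 1) + (mindeg e)%:R - 1 =
    (2 * nedges e * #|T| ^ 2 * (maxdeg e - 1) + (mindeg e - 1))%N%:R :> R.
  by rewrite natrD !natrM ?natrX (natrB _ D1) (natrB _ d1); ring.
by rewrite zagreb1E -natrD -natrM ler_nat tree_sum_sqr_deg_le.
Qed.
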